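(* Let $X$ be a separable completely metrizable space and $T:X\to X$ continuous. Then $T$ is quasi-rigid if and only if $T$ is topologically quasi-rigid.
   Context: $T$ is quasi-rigid with respect to a strictly increasing sequence $(n_k)_{k\in\mathbb{N}}$ of positive integers if there is a dense subset $Y\subset X$ such that $T^{n_k}x\to x$ as $k\to\infty$ for every $x\in Y$; $T$ is quasi-rigid if this holds for some such sequence. $T$ is topologically quasi-rigid with respect to $(n_k)$ if for every non-empty open $U\subset X$ there is $k_U$ with $T^{n_k}(U)\cap U\neq\varnothing$ for all $k\geq k_U$; topologically quasi-rigid means this holds for some such sequence. *)

From HB Require Import structures.
From mathcomp Require Import all_boot all_order all_algebra.
From mathcomp Require Import all_classical all_reals all_analysis.
From mathcomp Require Import Rstruct Rstruct_topology.
Set Implicit Arguments. Unset Strict Implicit. Unset Printing Implicit Defensive.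
Import Order.TTheory GRing.Theory Num.Theory.
Local Open Scope classical_set_scope.
Local Open Scope ring_scope.

Definition separable_space (X : topologicalType) : Prop :=
  exists D : set X, countable D /\ dense D.

Definition is_metric (X : Type) (d : X -> X -> Rdefinitions.R) : Prop :=
  (forall x y, 0 <= d x y) /\ (forall x y, d x y = 0 <-> x = y) /\
  (forall x y, d x y = d y x) /\ (forall x y z, d x z <= d x y + d y z).

Definition metric_induces_topology (X : topologicalType)
  (d : X -> X -> Rdefinitions.R) : Prop :=
  forall U : set X, open U <->
    (forall x, U x -> exists2 e : Rdefinitions.R, 0 < e &
       forall y, d x y < e -> U y).

Definition metric_complete (X : topologicalType)
  (d : X -> X -> Rdefinitions.R) : Prop :=
  forall u : nat -> X,
    (forall e : Rdefinitions.R, 0 < e -> exists N, forall m n,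
        (N <= m)%N -> (N <= n)%N -> d (u m) (u n) < e) ->
    exists l : X, u @ \oo --> l.

Definition completely_metrizable (X : topologicalType) : Prop :=
  exists d : X -> X -> Rdefinitions.R,
    [/\ is_metric d, metric_induces_topology d & metric_complete d].

Definition incr_pos_seq (n : nat -> nat) : Prop :=
  (0 < n 0)%N /\ (forall k, (n k < n k.+1)%N).

Definition quasi_rigid_wrt (X : topologicalType) (T : X -> X) (n : nat -> nat) :=
  exists Y : set X, dense Y /\
    forall x, Y x -> (fun k => iter (n k) T x) @ \oo --> x.

Definition quasi_rigid (X : topologicalType) (T : X -> X) : Prop :=
  exists n, incr_pos_seq n /\ quasi_rigid_wrt T n.

Definition top_quasi_rigid_wrt (X : topologicalType) (T : X -> X)
    (n : nat -> nat) : Prop :=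
  forall U : set X, open U -> U !=set0 ->
    exists kU : nat, forall k, (kU <= k)%N ->
      (iter (n k) T @` U) `&` U !=set0.

Definition top_quasi_rigid (X : topologicalType) (T : X -> X) : Prop :=
  exists n, incr_pos_seq n /\ top_quasi_rigid_wrt T n.

(* Quasi-rigidity along (n_k) gives topological quasi-rigidity along the same
   sequence, since the recurrent points are dense.  Conversely, topological
   quasi-rigidity along (n_k) provides in every ball B(c, r) a point y and an
   arbitrarily large k such that, by continuity of T^(n_k), every point of a
   small ball around y is moved by less than r.  Iterating inside nested balls
   with halving radii and using completeness gives, in any ball, a point x with
   T^(n_(k_j)) x -> x along a subsequence.  Topological quasi-rigidity passes to
   subsequences, so this can be repeated for the countably many balls
   B(q, 1/(p+1)), q in a countable dense set, each time along a further
   subsequence; the diagonal sequence then makes a dense set of points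
   recurrent simultaneously. *)

From mathcomp Require Import all_boot all_order all_algebra.
From mathcomp Require Import all_classical all_reals all_analysis.
From mathcomp Require Import Rstruct lra.

Set Implicit Arguments.
Unset Strict Implicit.
Unset Printing Implicit Defensive.

Import Order.TTheory GRing.Theory Num.Theory.
Local Open Scope classical_set_scope.
Local Open Scope ring_scope.

Lemma quasi_rigid_wrt_top (X : topologicalType) (T : X -> X) n :
  quasi_rigid_wrt T n -> top_quasi_rigid_wrt T n.
Proof.
move=> [Y [dY YT]] U oU U0.
have [y [Uy Yy]] := dY U U0 oU.
have [K _ HK] := YT y Yy U (open_nbhs_nbhs (conj oU Uy)).
by exists K => k Kk; exists (iter (n k) T y); split; [exists y | exact: HK].
Qed.

Lemma continuous_iter (X : topologicalType) (T : X -> X) m :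
  continuous T -> continuous (iter m T).
Proof.
move=> Tc; elim: m => [|m IHm] x /=; first exact: cvg_id.
exact: continuous_comp (IHm x) (Tc _).
Qed.

Lemma homo_ltn_leq (s : nat -> nat) :
  {homo s : i j / (i < j)%N} -> forall i, (i <= s i)%N.
Proof. by move=> s_incr; elim=> // i IHi; apply: leq_ltn_trans IHi (s_incr _ _ _). Qed.

Lemma top_quasi_rigid_wrt_subseq (X : topologicalType) (T : X -> X) n phi :
  {homo phi : i j / (i < j)%N} ->
  top_quasi_rigid_wrt T n -> top_quasi_rigid_wrt T (n \o phi).
Proof.
move=> phi_incr ntop U oU U0; have [K HK] := ntop U oU U0.
by exists K => k Kk; apply/HK/(leq_trans Kk)/homo_ltn_leq.
Qed.

Lemma dependent_choice (A : Type) (P : A -> Prop) (R : A -> A -> Prop) a0 :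
  P a0 -> (forall a, P a -> exists2 b, P b & R a b) ->
  exists s : nat -> A, s 0%N = a0 /\ forall j, P (s j) /\ R (s j) (s j.+1).
Proof.
move=> Pa0 PR.
have /choice[f Pf] : forall a, exists b, P a -> P b /\ R a b.
  move=> a; have [/PR[b Pb Rab]|] := pselect (P a); last by exists a.
  by exists b.
have Ps j : P (iter j f a0) by elim: j => //= j /Pf[].
by exists (fun j => iter j f a0); split => // j; split; last exact: (Pf _ (Ps j)).2.
Qed.

Lemma halving_eventually_lt (R : realType) (r : nat -> R) :
  (forall j, r j.+1 <= r j / 2) ->
  forall e, 0 < e -> exists N, forall j, (N <= j)%N -> r j < e.
Proof.
move=> r_half e e_gt0.
have r_geo j : r j <= r 0%N * 2^-1 ^+ j.
  elim: j => [|j IHj]; first by rewrite expr0 mulr1.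
  rewrite exprS mulrCA mulrC; apply: le_trans (r_half j) _.
  by rewrite ler_wpM2r ?invr_ge0.
wlog r0_gt0 : / 0 < r 0%N.
  move=> gen; have [|r0_le0] := ltP 0 (r 0%N); first exact: gen.
  exists 0%N => j _; apply: le_lt_trans (r_geo j) _.
  by apply: le_lt_trans e_gt0; rewrite pmulr_lle0 // exprn_gt0 // invr_gt0.
have geo_cvg : (GRing.exp (2^-1 : R) : R ^nat) @ \oo --> 0.
  by apply: cvg_expr; rewrite gtr0_norm ?invr_gt0 // invf_lt1 // ltr1n.
have [N _ HN] := cvgr_lt _ geo_cvg _ (divr_gt0 e_gt0 r0_gt0).
exists N => j /HN /= geo_lt; apply: le_lt_trans (r_geo j) _.
by rewrite mulrC -ltr_pdivlMr.
Qed.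

Definition eventually_subseq (m s : nat -> nat) :=
  exists J, forall j, (J <= j)%N -> exists2 k, (j <= k)%N & m j = s k.

Lemma cvg_eventually_subseq (Y : topologicalType) (u : nat -> Y) m s (y : Y) :
  eventually_subseq m s ->
  (fun k => u (s k)) @ \oo --> y -> (fun j => u (m j)) @ \oo --> y.
Proof.
move=> [J ms] us A /us[K _ HK]; exists (maxn J K) => // j /=.
rewrite geq_max => /andP[Jj Kj]; have [k jk ->] := ms j Jj.
exact/HK/(leq_trans Kj).
Qed.

Lemma diagonal_subseq (Q : (nat -> nat) -> Prop) (P : nat -> (nat -> nat) -> Prop) n :
  {homo n : i j / (i < j)%N} -> Q n ->
  (forall i s, {homo s : a b / (a < b)%N} -> Q s ->
     exists phi, [/\ {homo phi : a b / (a < b)%N}, Q (s \o phi) & P i (s \o phi)]) ->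
  exists m, [/\ {homo m : i j / (i < j)%N}, m 0%N = n 0%N &
    forall i, exists2 s, P i s & eventually_subseq m s].
Proof.
move=> n_incr Qn refine_step.
pose Inv (a : (nat -> nat) * nat) := {homo a.1 : i j / (i < j)%N} /\ Q a.1.
pose Next (a b : (nat -> nat) * nat) := [/\ b.2 = a.2.+1, P a.2 b.1 &
  exists2 phi, {homo phi : i j / (i < j)%N} & b.1 = a.1 \o phi].
have [S [S0 SP]] : exists S : nat -> (nat -> nat) * nat,
    S 0%N = (n, 0%N) /\ forall j, Inv (S j) /\ Next (S j) (S j.+1).
  apply: dependent_choice => // -[s i] [s_incr Qs].
  have [phi [phi_incr Qsphi Psphi]] := refine_step i s s_incr Qs.
  have sphi_incr : {homo s \o phi : a b / (a < b)%N}.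
    by move=> a b ab; apply/s_incr/phi_incr.
  by exists (s \o phi, i.+1); last by split => //; exists phi.
have S_idx j : (S j).2 = j.
  by elim: j => [|j IHj]; [rewrite S0 | have [_ [-> _ _]] := SP j; rewrite IHj].
have S_refines i t : exists2 psi, {homo psi : a b / (a < b)%N} &
    (S (i + t)%N).1 = (S i).1 \o psi.
  elim: t => [|t [psi psi_incr S_it]]; first by exists id; rewrite ?addn0.
  rewrite addnS; have [_ [_ _ [phi phi_incr ->]]] := SP (i + t)%N.
  by rewrite S_it; exists (psi \o phi) => // a b ab; apply/psi_incr/phi_incr.
pose m j := (S j).1 j.
have m_sub i j : (i <= j)%N -> exists2 k, (j <= k)%N & m j = (S i).1 k.
  move=> /subnKC <-; rewrite /m; have [psi psi_incr ->] := S_refines i (j - i)%N.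
  by exists (psi (i + (j - i))%N) => //; apply: homo_ltn_leq.
exists m; split.
- apply: homo_ltn => [a b c|j]; first exact: ltn_trans.
  have [k jk ->] := m_sub j j.+1 (leqnSn j).
  exact: (proj1 (SP j)).1 _ _ jk.
- by rewrite /m S0.
- move=> i; exists (S i.+1).1.
    by have [_ [_ + _]] := SP i; rewrite S_idx.
  by exists i.+1 => j /m_sub.
Qed.

Section MetricRecurrence.
Local Notation R := Rdefinitions.R.
Variables (X : topologicalType) (d : X -> X -> R).
Hypotheses (d_metric : is_metric d) (d_top : metric_induces_topology d).
Hypothesis d_complete : metric_complete d.

Let d_ge0 x y : 0 <= d x y. Proof. by case: d_metric. Qed.
Let d_sym x y : d x y = d y x. Proof. by case: d_metric => _ [_ []]. Qed.
Let d_triangle x y z : d x z <= d x y + d y z.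
Proof. by case: d_metric => _ [_ [_]]. Qed.
Let d_refl x : d x x = 0. Proof. by case: d_metric => _ [/(_ x x) [_ ->]]. Qed.

Lemma open_ball c r : open [set y | d c y < r].
Proof.
apply/d_top => y /= cy; exists (r - d c y); first by rewrite subr_gt0.
by move=> z yz /=; have := d_triangle c y z; lra.
Qed.

Lemma nbhs_ball c r : 0 < r -> nbhs c [set y | d c y < r].
Proof.
by move=> r_gt0; apply: open_nbhs_nbhs; split; [exact: open_ball | rewrite /= d_refl].
Qed.

Lemma nbhs_ex_ball x A : nbhs x A -> exists2 e, 0 < e & forall y, d x y < e -> A y.
Proof.
rewrite nbhsE => -[B [oB Bx] BA]; have [e e_gt0 eB] := proj1 (d_top B) oB x Bx.
by exists e => // y /eB /BA.
Qed.

Lemma cvg_metricP (u : nat -> X) l : u @ \oo --> l <->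
  forall e, 0 < e -> exists N, forall k, (N <= k)%N -> d l (u k) < e.
Proof.
split=> [ul e e_gt0 | ul A /nbhs_ex_ball[e e_gt0 eA]].
  by have [N _ HN] := ul _ (nbhs_ball l e_gt0); exists N => k /HN.
by have [N HN] := ul e e_gt0; exists N => // k /HN /eA.
Qed.

Lemma nbhs_displacement_lt (f : X -> X) y r :
  continuous f -> d y (f y) < r -> nbhs y [set z | d z (f z) < r].
Proof.
move=> fc yfy; set a := r - d y (f y).
have a2_gt0 : 0 < a / 2 by rewrite /a; lra.
have /nbhs_ex_ball[e e_gt0 ef] : nbhs y (f @^-1` [set z | d (f y) z < a / 2]).
  exact: fc y _ (nbhs_ball (f y) a2_gt0).
have ea_gt0 : 0 < Order.min e (a / 2) by rewrite lt_min e_gt0.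
apply: (filterS _ (nbhs_ball y ea_gt0)) => z /=.
rewrite lt_min => /andP[/ef /= fyz yz].
have := d_triangle z y (f z); have := d_triangle y (f y) (f z).
by rewrite (d_sym z y) /a in yz fyz *; lra.
Qed.

Lemma nested_balls_cvg (c : nat -> X) (r : nat -> R) :
  (forall j, d (c j) (c j.+1) < r j / 2) -> (forall j, r j.+1 <= r j / 2) ->
  exists x, forall j, d (c j) x < r j.
Proof.
move=> c_step r_half.
have r_gt0 j : 0 < r j by have := d_ge0 (c j) (c j.+1); have := c_step j; lra.
have c_chain j t : d (c j) (c (j + t)%N) <= r j - r (j + t)%N.
  elim: t => [|t IHt]; first by rewrite addn0 d_refl subrr.
  have := d_triangle (c j) (c (j + t)%N) (c (j + t).+1).
  by rewrite addnS; have := c_step (j + t)%N; have := r_half (j + t)%N; lra.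
have c_cauchy e : 0 < e -> exists N, forall a b, (N <= a)%N -> (N <= b)%N ->
    d (c a) (c b) < e.
  move=> e_gt0; have e2_gt0 : 0 < e / 2 by lra.
  have [N rN] := halving_eventually_lt r_half e2_gt0.
  exists N => a b /subnKC <- /subnKC <-.
  have := d_triangle (c (N + (a - N))%N) (c N) (c (N + (b - N))%N).
  have := c_chain N (a - N)%N; have := c_chain N (b - N)%N.
  have := rN N (leqnn N); have := r_gt0 (N + (a - N))%N; have := r_gt0 (N + (b - N))%N.
  by rewrite (d_sym _ (c N)); lra.
have [x /cvg_metricP cx] := d_complete c_cauchy.
have c_le j : d (c j) x <= r j.
  apply/ler_addgt0Pr => e /cx[N HN]; have := HN (j + N)%N (leq_addl _ _).
  have := d_triangle (c j) (c (j + N)%N) x; have := c_chain j N.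
  by have := r_gt0 (j + N)%N; rewrite (d_sym x); lra.
exists x => j; have := d_triangle (c j) (c j.+1) x.
by have := c_le j.+1; have := c_step j; have := r_half j; lra.
Qed.

Lemma dense_of_approx (D Y : set X) : dense D ->
  (forall q p, D q -> exists2 x, Y x & d q x < p.+1%:R^-1) -> dense Y.
Proof.
move=> dD DY O [z Oz] oO; have [e e_gt0 eO] := proj1 (d_top O) oO z Oz.
have e2_gt0 : 0 < e / 2 by lra.
have zz : d z z < e / 2 by rewrite d_refl.
have [q [zq Dq]] := dD _ (ex_intro _ z zz) (open_ball z (e / 2)).
have [p pe] : exists p, p.+1%:R^-1 < e / 2 :> R.
  by have [p] := ltr_add_invr e2_gt0; rewrite add0r; exists p.
have [x Yx qx] := DY q p Dq; exists x; split => //; apply: eO.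
apply: le_lt_trans (d_triangle z q x) _.
by rewrite [e]splitr; apply: ltrD zq (lt_trans qx pe).
Qed.

Variables (T : X -> X) (n : nat -> nat).
Hypotheses (T_cont : continuous T) (n_top : top_quasi_rigid_wrt T n).

Lemma small_displacement_ball c r kp : 0 < r ->
  exists y k r', [/\ (kp < k)%N, d c y < r / 2, 0 < r', r' <= r / 2 &
    forall z, d y z < r' -> d z (iter (n k) T z) < r].
Proof.
move=> r_gt0; have r2_gt0 : 0 < r / 2 by lra.
have cc : d c c < r / 2 by rewrite d_refl.
have [K HK] := n_top (open_ball c (r / 2)) (ex_intro _ c cc).
set k := maxn K kp.+1.
have [_ [[y cy <-] cTy]] := HK k (leq_maxl _ _).
have yTy : d y (iter (n k) T y) < r.
  apply: le_lt_trans (d_triangle y c _) _.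
  by rewrite (d_sym y c) [r]splitr; apply: ltrD.
have /nbhs_ex_ball[e e_gt0 eTe] := nbhs_displacement_lt (continuous_iter T_cont) yTy.
exists y, k, (Order.min e (r / 2)); split => //.
- exact: leq_maxr.
- by rewrite lt_min e_gt0.
- by rewrite ge_min lexx orbT.
- by move=> z; rewrite lt_min => /andP[/eTe].
Qed.

Lemma recurrent_point_near c0 r0 : 0 < r0 ->
  exists phi x, [/\ {homo phi : i j / (i < j)%N}, d c0 x < r0 &
    (fun j => iter (n (phi j)) T x) @ \oo --> x].
Proof.
move=> r0_gt0.
pose Next (a b : (X * R * nat)%type) := [/\ (a.2 < b.2)%N, d a.1.1 b.1.1 < a.1.2 / 2,
  b.1.2 <= a.1.2 / 2 & forall z, d b.1.1 z < b.1.2 -> d z (iter (n b.2) T z) < a.1.2].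
have [S [S0 SP]] : exists S : nat -> (X * R * nat)%type, S 0%N = (c0, r0, 0%N) /\
    forall j, 0 < (S j).1.2 /\ Next (S j) (S j.+1).
  apply: (@dependent_choice _ (fun a => 0 < a.1.2) Next) => // -[[c r] kp] /= r_gt0.
  have [y [k [r' [kpk cy r'_gt0 r'_le yk]]]] := small_displacement_ball c kp r_gt0.
  by exists (y, r', k).
pose r j := (S j).1.2.
have r_half j : r j.+1 <= r j / 2 by have [_ []] := SP j.
have [x cx] : exists x, forall j, d (S j).1.1 x < r j.
  by apply: nested_balls_cvg => // j; have [_ []] := SP j.
exists (fun j => (S j.+1).2), x; split.
- by apply: homo_ltn => [a b c|j]; [exact: ltn_trans | have [_ []] := SP j.+1].
- by have := cx 0%N; rewrite /r S0.
- apply/cvg_metricP => e e_gt0; have [N rN] := halving_eventually_lt r_half e_gt0.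
  exists N => j /rN; have [_ [_ _ _ /(_ x (cx j.+1))]] := SP j.
  by rewrite d_sym /r; lra.
Qed.

End MetricRecurrence.

Lemma top_quasi_rigid_wrt_quasi_rigid (X : topologicalType)
    (d : X -> X -> Rdefinitions.R) (T : X -> X) (D : set X) n :
  is_metric d -> metric_induces_topology d -> metric_complete d -> continuous T ->
  countable D -> dense D -> incr_pos_seq n -> top_quasi_rigid_wrt T n -> quasi_rigid T.
Proof.
move=> dm dtop dcomp Tc cD dD [n0_gt0 nS] ntop.
have n_incr : {homo n : i j / (i < j)%N}.
  by apply: homo_ltn nS => a b c; apply: ltn_trans.
case/pfcard_geP: (countableX cD (countableP [set: nat])) => [DN0 | /surjfunPex[f Df]].
  (* Then X is empty, and D is vacuously a dense set of recurrent points. *)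
  exists n; split => //; exists D; split => // x Dx.
  by have : (D `*` [set: nat]) (x, 0%N) by []; rewrite DN0.
pose P i s := exists2 x, d (f i).1 x < (f i).2.+1%:R^-1 &
  (fun k => iter (s k) T x) @ \oo --> x.
have [m [m_incr m0 mP]] : exists m, [/\ {homo m : i j / (i < j)%N}, m 0%N = n 0%N &
    forall i, exists2 s, P i s & eventually_subseq m s].
  apply: (diagonal_subseq (Q := top_quasi_rigid_wrt T)) => // i s s_incr s_top.
  have inv_gt0 : 0 < (f i).2.+1%:R^-1 :> Rdefinitions.R by rewrite invr_gt0.
  have [phi [x [phi_incr fx xrec]]] :=
    recurrent_point_near dm dtop dcomp Tc s_top (f i).1 inv_gt0.
  exists phi; split => //; last by exists x.
  exact: top_quasi_rigid_wrt_subseq.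
exists m; split; first by split => [|k]; [rewrite m0 | apply: m_incr].
exists [set x | (fun k => iter (m k) T x) @ \oo --> x]; split => //.
apply: (dense_of_approx dm dtop dD) => q p Dq.
have [i _ fi] : (f @` [set: nat]) (q, p) by rewrite -Df.
have [s [x qx xs] ms] := mP i.
exists x; last by rewrite fi in qx.
exact: (cvg_eventually_subseq (u := fun k => iter k T x) ms xs).
Qed.

Theorem mainTheorem2 (X : topologicalType) (T : X -> X) :
  separable_space X -> completely_metrizable X -> continuous T ->
  (quasi_rigid T <-> top_quasi_rigid T).
Proof.
move=> [D [cD dD]] [d [dm dtop dcomp]] Tc; split.
- by move=> [n [n_pos /quasi_rigid_wrt_top n_top]]; exists n.
- move=> [n [n_pos n_top]].
  exact: (top_quasi_rigid_wrt_quasi_rigid dm dtop dcomp Tc cD dD n_pos n_top).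
Qed.
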